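(* Let $k\geqslant0$ and $m\geqslant1$ be integers, let $U\subset\{k+1,\dots,k+m\}$, let $q$ be a positive integer and $a$ a residue class modulo $q$. If $|U|\geqslant\frac m2+\frac q2$, then the number of elements of $U+U$ that are congruent to $a$ modulo $q$ is at least $\frac2q|U|-1$.
   Context: $U+U=\{u+u':u,u'\in U\}$. *)

From HB Require Import structures.
From mathcomp Require Import all_boot all_order all_algebra.
From mathcomp Require Import finmap.
Set Implicit Arguments. Unset Strict Implicit. Unset Printing Implicit Defensive.
Local Open Scope fset_scope.

Definition sumset (U : {fset nat}) : {fset nat} :=
  [fset (u + v)%N | u in U, v in U].

(* Choose a residue r maximising |A_r| + |B_r|, where A_r is the part of U in
   the class r and B_r the part of U in the class a - r.  Averaging over r gives
   |A_r| + |B_r| >= 2|U|/q, and A_r + B_r is contained in the elements of U + U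
   congruent to a.  Two nonempty sets of integers satisfy
   |A + B| >= |A| + |B| - 1; nonemptiness holds because a residue class meets an
   interval of length m in at most (m - 1)/q + 1 points, which is less than
   2|U|/q once |U| >= (m + q)/2. *)

From HB Require Import structures.
From mathcomp Require Import all_boot all_order all_algebra.
From mathcomp Require Import finmap zify lra.
Import GRing.Theory Num.Theory.
Local Open Scope fset_scope.

Lemma card_addfset_ge {A B : {fset nat}} :
  A != fset0 -> B != fset0 ->
  (#|`A| + #|`B| <= #|` [fset (u + v)%N | u in A, v in B]| + 1)%N.
Proof.
move=> /fset0Pn exA /fset0Pn exB.
have le_max x : x \in A -> (x <= \max_(y <- A) y)%N.
  by move=> xA; apply: (@leq_bigmax_seq _ _ xpredT id).
have [a1 a1A a1_max] := ex_maxnP exA le_max.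
have [b0 b0B b0_min] := ex_minnP exB.
set S1 := [fset (u + b0)%N | u in A].
set S2 := [fset (a1 + v)%N | v in B].
have card_S1 : #|` S1| = #|` A|.
  by apply/eqP/card_in_imfsetP => x y _ _ /addIn.
have card_S2 : #|` S2| = #|` B|.
  by apply/eqP/card_in_imfsetP => x y _ _ /addnI.
have sub_S12 : S1 `|` S2 `<=` [fset (u + v)%N | u in A, v in B].
  by apply/fsubsetP => x /fsetUP [/imfsetP [u uA ->]|/imfsetP [v vB ->]];
    apply: in_imfset2.
have sub_I : S1 `&` S2 `<=` [fset (a1 + b0)%N].
  apply/fsubsetP => x /fsetIP [/imfsetP [u uA ->] /imfsetP [v vB]] /= e.
  by apply/fset1P; have := a1_max u uA; have := b0_min v vB; lia.
have := cardfsUI S1 S2; rewrite card_S1 card_S2 => <-.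
have := fsubset_leq_card sub_S12; have := fsubset_leq_card sub_I.
rewrite cardfs1; lia.
Qed.

(* u |-> (u - (k+1)) %/ q is injective on S and takes values in [0, (m-1) %/ q]. *)
Lemma card_residue_class_interval (S : {fset nat}) k m q :
  (0 < m)%N -> (0 < q)%N ->
  (forall u, u \in S -> (k + 1 <= u <= k + m)%N) ->
  (forall u v, u \in S -> v \in S -> u = v %[mod q]) ->
  (q * #|`S| < m + q)%N.
Proof.
move=> m_gt0 q_gt0 S_int S_cong.
pose g u := ((u - (k + 1)) %/ q)%N.
have g_inj : {in S &, injective g}.
  move=> u v uS vS guv; have := S_int u uS; have := S_int v vS => hv hu.
  have e : (u - (k + 1)) %% q = (v - (k + 1)) %% q.
    apply/eqP; rewrite -(eqn_modDr (k + 1)) !subnK ?(S_cong u v) //.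
    - by case/andP: hv.
    - by case/andP: hu.
  suff : (u - (k + 1) = v - (k + 1))%N by lia.
  by rewrite (divn_eq (u - (k + 1)) q) (divn_eq (v - (k + 1)) q) e [_ %/ q]guv.
have sub_g : g @` S `<=` [fset x in iota 0 ((m - 1) %/ q).+1].
  apply/fsubsetP => x /imfsetP [u uS ->].
  rewrite in_fset mem_iota add0n ltnS; apply: leq_div2r.
  by have := S_int u uS; lia.
have := fsubset_leq_card sub_g.
rewrite card_in_imfset // card_fseq undup_id ?iota_uniq // size_iota => le_S.
have := leq_divM (m - 1) q; rewrite mulnC.
by have := leq_mul2l q #|`S| ((m - 1) %/ q).+1; rewrite le_S orbT mulnS; lia.
Qed.

Lemma sum_card_fset_partition {T : choiceType} (U : {fset T}) q
    (P : T -> nat -> bool) :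
  (forall u, exists2 r, (r < q)%N & forall s, (s < q)%N -> P u s = (s == r)) ->
  (\sum_(r < q) #|` [fset x in U | P x r]|)%N = #|` U|.
Proof.
move=> P_unique.
under eq_bigr do rewrite card_fset_sum1 -big_fset_condE big_mkcond /=.
rewrite exchange_big /= card_fset_sum1; apply: eq_bigr => u _.
have [r r_lt P_r] := P_unique u.
rewrite (bigD1 (Ordinal r_lt)) //= P_r // eqxx big1 // => s s_neq_r.
by rewrite P_r // ifN //; apply: contra s_neq_r => /eqP s_r; apply/eqP/val_inj.
Qed.

Lemma modn_addr_unique q u a : (0 < q)%N ->
  exists2 r, (r < q)%N &
    forall s, (s < q)%N -> ((u + s) %% q == a %% q) = (s == r).
Proof.
move=> q_gt0; exists ((a + (q - u %% q)) %% q); first by rewrite ltn_mod.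
have u_r : (u + (a + (q - u %% q)) %% q = a %[mod q])%N.
  rewrite modnDmr (_ : u + (a + (q - u %% q)) = a + (u %/ q).+1 * q)%N.
    by rewrite addnC modnMDl.
  by have := divn_eq u q; have := ltn_pmod u q_gt0; lia.
move=> s s_lt; apply/eqP/eqP => [|->] //.
rewrite -u_r => /eqP; rewrite eqn_modDl => /eqP.
by rewrite modn_small // => ->; rewrite modn_mod.
Qed.

Lemma exists_ge_average q (f : 'I_q -> nat) : (0 < q)%N ->
  exists r : 'I_q, (\sum_(i < q) f i <= q * f r)%N.
Proof.
move=> q_gt0; have [r _ r_max] := @arg_maxnP _ (Ordinal q_gt0) xpredT f isT.
exists r; rewrite -[q in (_ <= q * _)%N]card_ord -sum_nat_const.
by apply: leq_sum => i _; apply: r_max.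
Qed.

Lemma card_sumset_residue_ge (a : nat) {k m q : nat} {U : {fset nat}} :
  (0 < m)%N -> (0 < q)%N ->
  (forall u, u \in U -> (k + 1 <= u <= k + m)%N) ->
  (m + q <= 2 * #|`U|)%N ->
  (2 * #|`U| <= q * (#|` [fset x in sumset U | x == a %[mod q]]| + 1))%N.
Proof.
move=> m_gt0 q_gt0 U_int m_le.
pose A r := [fset u in U | u %% q == r].
pose B r := [fset u in U | (u + r) %% q == a %% q].
have sum_A : (\sum_(r < q) #|` A r|)%N = #|`U|.
  apply: (sum_card_fset_partition U q (fun x r => x %% q == r)) => u.
  by exists (u %% q) => [|s _]; rewrite ?ltn_mod // eq_sym.
have sum_B : (\sum_(r < q) #|` B r|)%N = #|`U|.
  apply: (sum_card_fset_partition U q (fun x r => (x + r) %% q == a %% q)).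
  by move=> u; apply: modn_addr_unique.
have [r r_avg] := @exists_ge_average q (fun r : 'I_q => #|` A r| + #|` B r|)%N q_gt0.
rewrite /= big_split /= sum_A sum_B addnn -mul2n in r_avg.
have card_A : (q * #|` A r| < m + q)%N.
  apply: (@card_residue_class_interval _ k) => // [u|u v]; rewrite !inE.
    by case/andP => /U_int.
  by case/andP => _ /eqP -> /andP [_ /eqP ->].
have card_B : (q * #|` B r| < m + q)%N.
  apply: (@card_residue_class_interval _ k) => // [u|u v]; rewrite !inE.
    by case/andP => /U_int.
  case/andP => _ /eqP ur /andP [_ /eqP vr].
  by apply/eqP; rewrite -(eqn_modDr r) ur vr.
have A_neq0 : A r != fset0.
  rewrite -cardfs_gt0 lt0n; apply/eqP => A0; move: r_avg.
  by rewrite A0 add0n => /(leq_trans m_le)/leq_ltn_trans/(_ card_B); rewrite ltnn.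
have B_neq0 : B r != fset0.
  rewrite -cardfs_gt0 lt0n; apply/eqP => B0; move: r_avg.
  by rewrite B0 addn0 => /(leq_trans m_le)/leq_ltn_trans/(_ card_A); rewrite ltnn.
have sub_C : [fset (u + v)%N | u in A r, v in B r] `<=`
             [fset x in sumset U | x == a %[mod q]].
  apply/fsubsetP => x /imfset2P [u uA [v vB ->]].
  move: uA vB; rewrite !inE => /andP [uU /eqP ur] /andP [vU vr].
  by rewrite in_imfset2 //= -modnDml ur addnC.
apply: (leq_trans r_avg); rewrite leq_pmul2l //.
apply: (leq_trans (card_addfset_ge A_neq0 B_neq0)).
by rewrite leq_add2r fsubset_leq_card.
Qed.

Theorem mainTheorem7 (k m q a : nat) (U : {fset nat}) :
  (1 <= m)%N -> (0 < q)%N ->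
  (forall u, u \in U -> (k + 1 <= u <= k + m)%N) ->
  ((#|` U|%:R : rat) >= m%:R / 2 + q%:R / 2)%R ->
  ((#|` [fset x in sumset U | x == a %[mod q]]%fset|%:R : rat)
     >= 2 / q%:R * #|` U|%:R - 1)%R.
Proof.
move=> m_gt0 q_gt0 U_int U_large.
have m_le : (m + q <= 2 * #|`U|)%N by rewrite -(ler_nat rat) natrD natrM; lra.
have := card_sumset_residue_ge a m_gt0 q_gt0 U_int m_le.
rewrite -(ler_nat rat) !natrM natrD => count_le.
by rewrite lerBlDr mulrAC ler_pdivrMr ?ltr0n // [(_ * q%:R)%R]mulrC.
Qed.
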